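(* Let $(X,d)$ be a totally bounded metric space with II-modulus of total boundedness $\gamma$, let $\emptyset\ne F\subseteq X$ with a representation $(\tilde F_k)$, and let $G,H:\mathbb{R}_+\to\mathbb{R}_+$ have a $G$-modulus $\alpha_G$ and an $H$-modulus $\beta_H$. Let $(x_n)$ be a sequence in $X$ such that (1) $(x_n)$ is uniformly $(G,H)$-Fej\'er monotone w.r.t. $F$ with modulus $\chi$, and (2) $(x_n)$ has approximate $F$-points with $\Phi$ an approximate $F$-point bound. Then $(x_n)$ is Cauchy and, moreover, for all $k\in\mathbb{N}$ and all $g:\mathbb{N}\to\mathbb{N}$ there exists $N\le\Psi(k,g,\Phi,\chi,\alpha_G,\beta_H,\gamma)$ such that $d(x_i,x_j)\le\frac1{k+1}$ for all $i,j\in[N,N+g(N)]$, where $\Psi(k,g,\Phi,\chi,\alpha_G,\beta_H,\gamma):=\Psi_0(P)$ with $P:=\gamma(\alpha_G(2\beta_H(2k+1)+1))$, $\chi_g(n,r):=\chi(n,g(n),r)$, $\chi_g^M(n,r):=\max\{\chi_g(i,r)\mid i\le n\}$, and $$\Psi_0(0):=0,\qquad \Psi_0(n+1):=\Phi\Big(\chi_g^M\big(\Psi_0(n),\,2\beta_H(2k+1)+1\big)\Big).$$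
   Context: $\mathbb{N}$ includes $0$; $\mathbb{R}_+$ the nonnegative reals. A II-modulus of total boundedness for $X$ is $\gamma:\mathbb{N}\to\mathbb{N}$ such that for every $k$ and every sequence $(y_n)$ in $X$ there are $0\le i<j\le\gamma(k)$ with $d(y_i,y_j)\le\frac1{k+1}$. A representation of $F$ is a family of sets $\tilde F_k\subseteq X$ with $F=\bigcap_k\tilde F_k$; $AF_k:=\bigcap_{l\le k}\tilde F_l$. A $G$-modulus is $\alpha_G:\mathbb{N}\to\mathbb{N}$ with: for all $k$ and $a\in\mathbb{R}_+$, $a\le\frac1{\alpha_G(k)+1}$ implies $G(a)\le\frac1{k+1}$. An $H$-modulus is $\beta_H:\mathbb{N}\to\mathbb{N}$ with: for all $k$ and $a\in\mathbb{R}_+$, $H(a)\le\frac1{\beta_H(k)+1}$ implies $a\le\frac1{k+1}$. $(x_n)$ is uniformly $(G,H)$-Fej\'er monotone w.r.t. $F$ with modulus $\chi:\mathbb{N}^3\to\mathbb{N}$ if for all $r,n,m\in\mathbb{N}$ and all $p\in X$ with $p\in AF_{\chi(n,m,r)}$ one has $H(d(x_{n+l},p))<G(d(x_n,p))+\frac1{r+1}$ for all $l\le m$. $(x_n)$ has approximate $F$-points if for every $k$ some $x_N\in AF_k$; an approximate $F$-point bound is a monotone nondecreasing $\Phi:\mathbb{N}\to\mathbb{N}$ such that for every $k$ there is $N\le\Phi(k)$ with $x_N\in AF_k$ (the paper assumes throughout that approximate $F$-point bounds are nondecreasing). *)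

From Stdlib Require Import Reals Lra Lia Arith.
Open Scope R_scope.

Definition II_modulus (X : Metric_Space) (gamma : nat -> nat) : Prop :=
  forall (k : nat) (y : nat -> Base X),
    exists i j : nat, (i < j)%nat /\ (j <= gamma k)%nat /\
      dist X (y i) (y j) <= 1 / (INR k + 1).

Definition AF {X : Type} (Ft : nat -> X -> Prop) (k : nat) (p : X) : Prop :=
  forall l : nat, (l <= k)%nat -> Ft l p.

Definition Fset {X : Type} (Ft : nat -> X -> Prop) (p : X) : Prop :=
  forall k : nat, Ft k p.

Definition G_modulus (G : R -> R) (alphaG : nat -> nat) : Prop :=
  forall (k : nat) (a : R), 0 <= a ->
    a <= 1 / (INR (alphaG k) + 1) -> G a <= 1 / (INR k + 1).

Definition H_modulus (H : R -> R) (betaH : nat -> nat) : Prop :=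
  forall (k : nat) (a : R), 0 <= a ->
    H a <= 1 / (INR (betaH k) + 1) -> a <= 1 / (INR k + 1).

Definition unif_GH_Fejer (X : Metric_Space) (G H : R -> R)
    (Ft : nat -> Base X -> Prop) (x : nat -> Base X)
    (chi : nat -> nat -> nat -> nat) : Prop :=
  forall (r n m : nat) (p : Base X), AF Ft (chi n m r) p ->
    forall l : nat, (l <= m)%nat ->
      H (dist X (x (n + l)%nat) p) < G (dist X (x n) p) + 1 / (INR r + 1).

Definition approx_F_point_bound {X : Type} (Ft : nat -> X -> Prop)
    (x : nat -> X) (Phi : nat -> nat) : Prop :=
  (forall a b : nat, (a <= b)%nat -> (Phi a <= Phi b)%nat) /\
  (forall k : nat, exists N : nat, (N <= Phi k)%nat /\ AF Ft k (x N)).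

Definition Cauchy_seq (X : Metric_Space) (x : nat -> Base X) : Prop :=
  forall eps : R, eps > 0 -> exists N : nat,
    forall n m : nat, (n >= N)%nat -> (m >= N)%nat -> dist X (x n) (x m) < eps.

Fixpoint max_upto (f : nat -> nat) (n : nat) : nat :=
  match n with
  | O => f O
  | S n' => Nat.max (max_upto f n') (f (S n'))
  end.

Definition chiM (chi : nat -> nat -> nat -> nat) (g : nat -> nat) (n r : nat) : nat :=
  max_upto (fun i => chi i (g i) r) n.

Fixpoint Psi0 (k : nat) (g : nat -> nat) (Phi : nat -> nat)
    (chi : nat -> nat -> nat -> nat) (betaH : nat -> nat) (n : nat) : nat :=
  match n with
  | O => O
  | S n' => Phi (chiM chi g (Psi0 k g Phi chi betaH n') (2 * betaH (2 * k + 1) + 1)%nat)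
  end.

Definition Psi (k : nat) (g : nat -> nat) (Phi : nat -> nat)
    (chi : nat -> nat -> nat -> nat) (alphaG betaH gamma : nat -> nat) : nat :=
  Psi0 k g Phi chi betaH (gamma (alphaG (2 * betaH (2 * k + 1) + 1)%nat)).

(* Apply the II-modulus to the approximate F-points y_n := x_{M_n}, where x_{M_n} lies in
   AF at level chi_g^M(Psi0 n, r) and M_n <= Psi0 (n+1).  This yields i < j <= P with
   x_{M_i} close to p := x_{M_j}; since p lies deep enough in AF for the Fejer inequality
   at N := M_i, the whole block x_N, ..., x_{N+g N} stays within 1/(2k+2) of p, hence has
   diameter at most 1/(k+1).  Metastability for every g gives the Cauchy property. *)

From Stdlib Require Import Reals Lra Lia ClassicalEpsilon Classical.
Open Scope R_scope.

Lemma max_upto_ge (f : nat -> nat) (n i : nat) :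
  (i <= n)%nat -> (f i <= max_upto f n)%nat.
Proof.
  induction n as [|n IH]; intros Hi; simpl.
  - replace i with 0%nat by lia; lia.
  - destruct (Nat.eq_dec i (S n)) as [->|Hne]; [lia|].
    specialize (IH ltac:(lia)); lia.
Qed.

Lemma max_upto_mono (f : nat -> nat) (a b : nat) :
  (a <= b)%nat -> (max_upto f a <= max_upto f b)%nat.
Proof. induction 1; simpl; lia. Qed.

Lemma Psi0_mono (k : nat) (g Phi : nat -> nat) (chi : nat -> nat -> nat -> nat)
    (betaH : nat -> nat) :
  (forall a b : nat, (a <= b)%nat -> (Phi a <= Phi b)%nat) ->
  forall n m : nat, (n <= m)%nat ->
    (Psi0 k g Phi chi betaH n <= Psi0 k g Phi chi betaH m)%nat.
Proof.
  intros HPhi.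
  assert (Hstep : forall n, (Psi0 k g Phi chi betaH n <= Psi0 k g Phi chi betaH (S n))%nat).
  { induction n as [|n IH]; simpl; [lia|].
    apply HPhi, max_upto_mono, IH. }
  induction 1 as [|m _ IH]; [lia|].
  specialize (Hstep m); lia.
Qed.

Lemma AF_mono {T : Type} (Ft : nat -> T -> Prop) (a b : nat) (p : T) :
  (a <= b)%nat -> AF Ft b p -> AF Ft a p.
Proof. intros Hab Hb l Hl; apply Hb; lia. Qed.

Lemma approx_F_point_choice {T : Type} (Ft : nat -> T -> Prop) (x : nat -> T)
    (Phi : nat -> nat) :
  approx_F_point_bound Ft x Phi ->
  exists M : nat -> nat, forall n, (M n <= Phi n)%nat /\ AF Ft n (x (M n)).
Proof.
  intros [_ Hex].
  exists (fun n => proj1_sig (constructive_indefinite_description _ (Hex n))).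
  intros n; exact (proj2_sig (constructive_indefinite_description _ (Hex n))).
Qed.

Lemma inv_double_succ_add (n : nat) :
  1 / (INR (2 * n + 1) + 1) + 1 / (INR (2 * n + 1) + 1) = 1 / (INR n + 1).
Proof.
  rewrite plus_INR, mult_INR; simpl.
  pose proof (pos_INR n); field; lra.
Qed.

Lemma dist_le_via (X : Metric_Space) (a b p : Base X) (k : nat) :
  dist X a p <= 1 / (INR (2 * k + 1) + 1) ->
  dist X b p <= 1 / (INR (2 * k + 1) + 1) ->
  dist X a b <= 1 / (INR k + 1).
Proof.
  intros Ha Hb.
  pose proof (dist_tri X a b p) as Htri.
  rewrite (dist_sym X p b) in Htri.
  rewrite <- inv_double_succ_add; lra.
Qed.

Section FejerBall.

Variables (X : Metric_Space) (G H : R -> R) (alphaG betaH : nat -> nat)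
  (Ft : nat -> Base X -> Prop) (x : nat -> Base X) (chi : nat -> nat -> nat -> nat).

Hypothesis HG : G_modulus G alphaG.
Hypothesis HH : H_modulus H betaH.
Hypothesis HF : unif_GH_Fejer X G H Ft x chi.

(* The Fejer error 1/(r+1) with r = 2 betaH k + 1 and the G-error add up to
   exactly 1/(betaH k + 1), the threshold of the H-modulus. *)
Lemma Fejer_ball (k N m : nat) (p : Base X) :
  let r := (2 * betaH k + 1)%nat in
  AF Ft (chi N m r) p ->
  dist X (x N) p <= 1 / (INR (alphaG r) + 1) ->
  forall l : nat, (l <= m)%nat -> dist X (x (N + l)%nat) p <= 1 / (INR k + 1).
Proof.
  intros r Hp Hclose l Hl.
  apply HH; [apply Rge_le, dist_pos|].
  pose proof (HF r N m p Hp l Hl) as Hfejer.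
  pose proof (HG r (dist X (x N) p) (Rge_le _ _ (dist_pos X (x N) p)) Hclose) as HGsmall.
  unfold r in *; rewrite <- inv_double_succ_add; lra.
Qed.

End FejerBall.

Lemma metastability_rate (X : Metric_Space) (gamma : nat -> nat)
    (Ft : nat -> Base X -> Prop) (G H : R -> R) (alphaG betaH : nat -> nat)
    (chi : nat -> nat -> nat -> nat) (Phi : nat -> nat) (x : nat -> Base X) :
  II_modulus X gamma ->
  G_modulus G alphaG ->
  H_modulus H betaH ->
  unif_GH_Fejer X G H Ft x chi ->
  approx_F_point_bound Ft x Phi ->
  forall (k : nat) (g : nat -> nat),
    exists N : nat, (N <= Psi k g Phi chi alphaG betaH gamma)%nat /\
      forall i j : nat, (N <= i <= N + g N)%nat -> (N <= j <= N + g N)%nat ->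
        dist X (x i) (x j) <= 1 / (INR k + 1).
Proof.
  intros HII HG HH HF HPhi k g.
  set (r := (2 * betaH (2 * k + 1) + 1)%nat).
  set (a := Psi0 k g Phi chi betaH).
  assert (Ha_mono : forall n m, (n <= m)%nat -> (a n <= a m)%nat)
    by exact (Psi0_mono k g Phi chi betaH (proj1 HPhi)).
  destruct (approx_F_point_choice Ft x Phi HPhi) as [M HM].
  set (y := fun n => M (chiM chi g (a n) r)).
  assert (Hy_le : forall n, (y n <= a (S n))%nat) by (intros n; apply HM).
  destruct (HII (alphaG r) (fun n => x (y n))) as (i & j & Hij & HjP & Hclose).
  exists (y i); split.
  - specialize (Hy_le i); specialize (Ha_mono (S i) (gamma (alphaG r)) ltac:(lia)).
    unfold Psi; fold r; fold a; lia.
  - assert (Hp : AF Ft (chi (y i) (g (y i)) r) (x (y j))).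
    { apply (AF_mono Ft _ (chiM chi g (a j) r)); [|apply HM].
      apply (max_upto_ge (fun n => chi n (g n) r)).
      specialize (Hy_le i); specialize (Ha_mono (S i) j Hij); lia. }
    pose proof (Fejer_ball X G H alphaG betaH Ft x chi HG HH HF
                  (2 * k + 1) (y i) (g (y i)) (x (y j)) Hp Hclose) as Hball.
    intros i0 j0 Hi0 Hj0.
    replace i0 with (y i + (i0 - y i))%nat by lia.
    replace j0 with (y i + (j0 - y i))%nat by lia.
    apply dist_le_via with (p := x (y j)); apply Hball; lia.
Qed.

Lemma Cauchy_of_metastable (X : Metric_Space) (x : nat -> Base X) :
  (forall (k : nat) (g : nat -> nat), exists N : nat,
     forall i j : nat, (N <= i <= N + g N)%nat -> (N <= j <= N + g N)%nat ->
       dist X (x i) (x j) <= 1 / (INR k + 1)) ->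
  Cauchy_seq X x.
Proof.
  intros Hmeta eps Heps.
  apply NNPP; intros Hnot.
  assert (Hbad : forall N, exists nm : nat * nat,
            (fst nm >= N)%nat /\ (snd nm >= N)%nat /\ ~ dist X (x (fst nm)) (x (snd nm)) < eps).
  { intros N; apply NNPP; intros Hno; apply Hnot; exists N; intros n m Hn Hm.
    apply NNPP; intros Hd; apply Hno; exists (n, m); auto. }
  pose (w := fun N => proj1_sig (constructive_indefinite_description _ (Hbad N))).
  assert (Hw : forall N, (fst (w N) >= N)%nat /\ (snd (w N) >= N)%nat /\
                 ~ dist X (x (fst (w N))) (x (snd (w N))) < eps)
    by (intros N; exact (proj2_sig (constructive_indefinite_description _ (Hbad N)))).
  destruct (archimed_cor1 eps Heps) as (k & Hk & Hk0).
  destruct (Hmeta k (fun N => (fst (w N) + snd (w N))%nat)) as (N & HN).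
  destruct (Hw N) as (H1 & H2 & Hfar).
  apply Hfar.
  pose proof (HN (fst (w N)) (snd (w N)) ltac:(lia) ltac:(lia)) as Hnear.
  assert (Hkpos : 0 < INR k) by (apply lt_0_INR; lia).
  assert (1 / (INR k + 1) < / INR k).
  { unfold Rdiv; rewrite Rmult_1_l; apply Rinv_lt_contravar; nra. }
  lra.
Qed.

Theorem theorem5p1 (X : Metric_Space) (gamma : nat -> nat)
    (Ft : nat -> Base X -> Prop) (G H : R -> R) (alphaG betaH : nat -> nat)
    (chi : nat -> nat -> nat -> nat) (Phi : nat -> nat) (x : nat -> Base X) :
  II_modulus X gamma ->
  (exists p : Base X, Fset Ft p) ->
  (forall a : R, 0 <= a -> 0 <= G a) ->
  (forall a : R, 0 <= a -> 0 <= H a) ->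
  G_modulus G alphaG ->
  H_modulus H betaH ->
  unif_GH_Fejer X G H Ft x chi ->
  approx_F_point_bound Ft x Phi ->
  Cauchy_seq X x /\
  (forall (k : nat) (g : nat -> nat),
     exists N : nat, (N <= Psi k g Phi chi alphaG betaH gamma)%nat /\
       forall i j : nat, (N <= i <= N + g N)%nat -> (N <= j <= N + g N)%nat ->
         dist X (x i) (x j) <= 1 / (INR k + 1)).
Proof.
  intros HII _ _ _ HG HH HF HPhi.
  pose proof (metastability_rate X gamma Ft G H alphaG betaH chi Phi x HII HG HH HF HPhi)
    as Hrate.
  split; [|exact Hrate].
  apply Cauchy_of_metastable.
  intros k g; destruct (Hrate k g) as (N & _ & HN); exists N; exact HN.
Qed.
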